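(* Let $F$ be a saturated minimally unsatisfiable clause-set. Then singular DP-reduction is confluent on $F$, i.e., $|\mathrm{sDP}(F)| = 1$. In other words, the class of saturated minimally unsatisfiable clause-sets is contained in the class of $F \in \mathrm{MU}$ with $|\mathrm{sDP}(F)|=1$.
   Context: Literals are variables $v$ and their complements $\overline{v}$. A clause is a finite set of literals containing no complementary pair; a clause-set is a finite set of clauses. $\mathrm{var}(F)$ is the set of variables occurring in $F$. For a literal $x$, $\mathrm{ldeg}_F(x)$ is the number of clauses of $F$ containing $x$. For a variable $v$, the DP-reduction is $\mathrm{DP}_v(F) := \{C \in F : v \notin \mathrm{var}(C)\} \cup \{(C \cup D)\setminus\{v,\overline{v}\} : C, D \in F,\ C \cap \overline{D} = \{v\}\}$ (where $\overline{D}=\{\overline{y}: y\in D\}$). $\mathrm{MU}$ is the set of minimally unsatisfiable clause-sets (unsatisfiable, but every proper subset is satisfiable). $F \in \mathrm{MU}$ is saturated if for every $C \in F$ and every literal $x$ with $\mathrm{var}(x) \in \mathrm{var}(F)\setminus \mathrm{var}(C)$, the clause-set $(F\setminus\{C\})\cup\{C\cup\{x\}\}$ is satisfiable. A variable $v$ is singular for $F$ if $\min(\mathrm{ldeg}_F(v),\mathrm{ldeg}_F(\overline{v}))=1$; $F$ is nonsingular if it has no singular variable. A singular DP-reduction step is $F \leadsto \mathrm{DP}_v(F)$ for $F\in \mathrm{MU}$ and $v$ singular for $F$ (the result is again in $\mathrm{MU}$). $\mathrm{sDP}(F)$ is the set of nonsingular $F' \in \mathrm{MU}$ obtainable from $F$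 by zero or more singular DP-reduction steps. *)

From mathcomp Require Import all_boot.
Set Implicit Arguments. Unset Strict Implicit. Unset Printing Implicit Defensive.

Section Clauses.
Variable V : finType.

(* A literal is a pair (sign, variable): (true, v) is v, (false, v) is ~v. *)
Definition lit := (bool * V)%type.
Definition clause := {set lit}.
Definition clauseset := {set clause}.

Definition compl (x : lit) : lit := (~~ x.1, x.2).
Definition posl (v : V) : lit := (true, v).
Definition negl (v : V) : lit := (false, v).

Definition clause_ok (C : clause) : bool := [forall x in C, compl x \notin C].
Definition cls_ok (F : clauseset) : bool := [forall C in F, clause_ok C].

Definition varC (C : clause) : {set V} := [set x.2 | x in C].
Definition var (F : clauseset) : {set V} := \bigcup_(C in F) varC C.

Definition ldeg (F : clauseset) (x : lit) : nat := #|[set C in F | x \in C]|.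

Definition complC (D : clause) : clause := [set compl y | y in D].

Definition DP (v : V) (F : clauseset) : clauseset :=
  [set C in F | v \notin varC C] :|:
  [set (C :|: D) :\: [set posl v; negl v]
     | C in F, D in F & C :&: complC D == [set posl v]].

Definition satisfies (f : {ffun V -> bool}) (F : clauseset) : bool :=
  [forall C in F, [exists x in C, f x.2 == x.1]].
Definition sat (F : clauseset) : bool := [exists f, satisfies f F].

Definition MU (F : clauseset) : bool :=
  [&& cls_ok F, ~~ sat F & [forall G : clauseset, (G \proper F) ==> sat G]].

Definition saturated (F : clauseset) : bool :=
  MU F &&
  [forall C in F, forall x : lit,
     ((x.2 \in var F) && (x.2 \notin varC C)) ==>
       sat ((F :\ C) :|: [set C :|: [set x]])].

Definition singular (F : clauseset) (v : V) : bool :=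
  minn (ldeg F (posl v)) (ldeg F (negl v)) == 1.

Definition nonsingular (F : clauseset) : bool := [forall v, ~~ singular F v].

Definition sDP_step : rel clauseset :=
  fun F G => MU F && [exists v, singular F v && (G == DP v F)].

Definition sDP (F : clauseset) : {set clauseset} :=
  [set G | [&& connect sDP_step F G, nonsingular G & MU G]].

End Clauses.

From mathcomp Require Import all_boot zify.
Set Implicit Arguments. Unset Strict Implicit. Unset Printing Implicit Defensive.

(* Let [C] be the only clause of a saturated [F] containing the literal [x].
   Saturation forces [C :\ x] into every clause containing [compl x], so the
   singular DP-reduction on the variable of [x] is just the partial assignment
   making [x] true.  That assignment preserves saturation and does not increase
   the degree of any other literal, so two singular reductions on different
   variables are joined by at most one further singular step each.  Since every
   step removes a clause, Newman's lemma gives a unique normal form. *)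

Section Newman.
Variables (T : finType) (e : rel T) (P : pred T) (m : T -> nat).
Hypothesis step_decr : forall x y, P x -> e x y -> P y /\ m y < m x.
Hypothesis local_confluence : forall x y z, P x -> e x y -> e x z ->
  exists2 w, connect e y w & connect e z w.

Definition normal x := [forall y, ~~ e x y].

Lemma connect_first_step x y : connect e x y -> x = y \/ exists2 z, e x z & connect e z y.
Proof.
case/connectP => [[|z p]] /= => [_ ->|/andP [exz pz] ->]; first by left.
by right; exists z => //; apply/connectP; exists p.
Qed.

Lemma connect_normal x y : normal x -> connect e x y -> y = x.
Proof.
move=> /forallP nx /connect_first_step [//|[z exz _]].
by move: (nx z); rewrite exz.
Qed.

Lemma connect_inv x y : P x -> connect e x y -> P y.
Proof.
move=> Px /connectP [p]; elim: p x Px => [|z p IH] x Px /=; first by move=> _ ->.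
by case/andP => exz pz; apply: IH pz; case: (step_decr Px exz).
Qed.

Lemma exists_normal x : P x -> exists2 n, connect e x n & normal n.
Proof.
have [k] := ubnP (m x); elim: k x => // k IH x mx Px.
have [nx|] := boolP (normal x); first by exists x.
case/forallPn => y /negPn exy; have [Py my] := step_decr Px exy.
have [n yn nn] := IH y (leq_trans my mx) Py.
by exists n => //; apply: connect_trans (connect1 exy) yn.
Qed.

Lemma normal_unique x n1 n2 : P x ->
  connect e x n1 -> normal n1 -> connect e x n2 -> normal n2 -> n1 = n2.
Proof.
have [k] := ubnP (m x); elim: k x n1 n2 => // k IH x n1 n2 mx Px xn1 nn1 xn2 nn2.
case: (connect_first_step xn1) => [ex1|[y exy yn1]].
  by subst x; rewrite (connect_normal nn1 xn2).
case: (connect_first_step xn2) => [ex2|[z exz zn2]].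
  by subst x; move/forallP: nn2 => /(_ y); rewrite exy.
have [w yw zw] := local_confluence Px exy exz.
have [Py my] := step_decr Px exy; have [Pz mz] := step_decr Px exz.
have [n wn nn] := exists_normal (connect_inv Py yw).
rewrite (IH y n1 n (leq_trans my mx) Py) ?(connect_trans yw wn) //.
by rewrite (IH z n2 n (leq_trans mz mx) Pz) ?(connect_trans zw wn).
Qed.

Lemma card_normal_forms x : P x -> #|[set n | connect e x n && normal n]| = 1.
Proof.
move=> Px; have [n xn nn] := exists_normal Px; apply/eqP/cards1P; exists n.
apply/setP => y; rewrite !inE; apply/andP/eqP => [[xy ny]|->] //.
exact: normal_unique Px xy ny xn nn.
Qed.

End Newman.

Section Clauses.
Variable V : finType.
Implicit Types (F G : clauseset V) (C D E : clause V) (x y z w : lit V)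
  (f g : {ffun V -> bool}).

Lemma complK : involutive (@compl V).
Proof. by case=> [[] u]. Qed.

Lemma same_var_lit w x : w.2 = x.2 -> w = x \/ w = compl x.
Proof. by case: w x => [b u] [c u'] /= ->; case: b; case: c; auto. Qed.

Lemma varC_lit x C : (x.2 \in varC C) = (x \in C) || (compl x \in C).
Proof.
apply/imsetP/orP => [[w wC /esym/same_var_lit [] <-]|[xC|cxC]]; auto.
- by exists x.
- by exists (compl x).
Qed.

Lemma mem_var F C w : C \in F -> w \in C -> w.2 \in var F.
Proof. by move=> CF wC; apply/bigcupP; exists C => //; apply/imsetP; exists w. Qed.

Lemma in_complC w D : (w \in complC D) = (compl w \in D).
Proof.
apply/imsetP/idP => [[y yD ->]|h]; first by rewrite complK.
by exists (compl w); rewrite ?complK.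
Qed.

Lemma clause_okP C x : clause_ok C -> x \in C -> compl x \notin C.
Proof. by move=> /forall_inP; apply. Qed.

Lemma cls_okP F C : cls_ok F -> C \in F -> clause_ok C.
Proof. by move=> /forall_inP; apply. Qed.

Definition sat_lit f x := f x.2 == x.1.
Definition sat_clause f C := [exists w in C, sat_lit f w].

Definition setlit f x : {ffun V -> bool} := [ffun u => if u == x.2 then x.1 else f u].

Lemma sat_lit_compl f w : sat_lit f (compl w) = ~~ sat_lit f w.
Proof. by case: w => [[] u]; rewrite /sat_lit /=; case: (f u). Qed.

Lemma sat_clauseP f C : reflect (exists2 w, w \in C & sat_lit f w) (sat_clause f C).
Proof. exact: exists_inP. Qed.

Lemma satisfiesP f F : reflect (forall C, C \in F -> sat_clause f C) (satisfies f F).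
Proof. exact: forall_inP. Qed.

Lemma sat_clause_sub f C D : C \subset D -> sat_clause f C -> sat_clause f D.
Proof. by move=> /subsetP sCD /sat_clauseP [w /sCD wD h]; apply/sat_clauseP; exists w. Qed.

Lemma satisfies_sub f F G : G \subset F -> satisfies f F -> satisfies f G.
Proof. by move=> /subsetP sGF /satisfiesP h; apply/satisfiesP => C /sGF; apply: h. Qed.

Lemma sat_sub F G : G \subset F -> sat F -> sat G.
Proof. by move=> sGF /existsP [f hf]; apply/existsP; exists f; apply: satisfies_sub hf. Qed.

Lemma satisfiesD1 f F D : satisfies f (F :\ D) -> sat_clause f D -> satisfies f F.
Proof.
move=> /satisfiesP h hD; apply/satisfiesP => C CF.
by case: (eqVneq C D) => [->//|ne]; apply: h; rewrite in_setD1 ne.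
Qed.

Lemma setlit_other f x w : w.2 != x.2 -> sat_lit (setlit f x) w = sat_lit f w.
Proof. by rewrite /sat_lit ffunE => /negPf ->. Qed.

Lemma setlit_hit f x C : x \in C -> sat_clause (setlit f x) C.
Proof. by move=> xC; apply/sat_clauseP; exists x; rewrite // /sat_lit ffunE eqxx. Qed.

Lemma setlit_keep f x C : x.2 \notin varC C -> sat_clause f C -> sat_clause (setlit f x) C.
Proof.
move=> xC /sat_clauseP [w wC h]; apply/sat_clauseP; exists w => //.
rewrite setlit_other //; apply: contra xC => /eqP <-.
by apply/imsetP; exists w.
Qed.

Lemma MUP F : MU F -> [/\ cls_ok F, ~~ sat F & forall G, G \proper F -> sat G].
Proof. by case/and3P => a b /forallP c; split => // G; move: (c G) => /implyP. Qed.

Lemma MU_satD1 F C : MU F -> C \in F -> sat (F :\ C).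
Proof. by case/MUP => _ _ h CF; apply: h; rewrite properD1. Qed.

Lemma unsat_satisfies F : ~~ sat F -> forall f, ~~ satisfies f F.
Proof. by move=> /existsPn. Qed.

Lemma ldeg0 F x : ldeg F x = 0 -> forall C, C \in F -> x \notin C.
Proof.
move=> /cards0_eq h C CF; apply: contra_eqN h => xC.
by apply/set0Pn; exists C; rewrite inE CF.
Qed.

Lemma ldeg1P F x : ldeg F x = 1 ->
  exists C, [/\ C \in F, x \in C & forall D, D \in F -> x \in D -> D = C].
Proof.
move=> /eqP /cards1P [C hC]; exists C.
have : C \in [set D in F | x \in D] by rewrite hC set11.
rewrite inE => /andP [CF xC]; split => // D DF xD.
by apply/set1P; rewrite -hC inE DF.
Qed.

Lemma MU_ldeg_gt0 F x : MU F -> x.2 \in var F -> 0 < ldeg F x.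
Proof.
move=> muF /bigcupP [E EF]; rewrite varC_lit lt0n => xE.
apply/negP => /eqP /ldeg0 x_pure.
have cxE : compl x \in E by move: xE; rewrite (negPf (x_pure E EF)).
case/existsP: (MU_satD1 muF EF) => f hf.
case/MUP: muF => _ /unsat_satisfies /(_ (setlit f (compl x))) /negP + _; apply.
apply/satisfiesP => D DF; have [cxD|cxD] := boolP (compl x \in D).
  exact: setlit_hit.
apply: setlit_keep; first by rewrite varC_lit negb_or cxD complK x_pure.
by apply: (satisfiesP _ _ hf); rewrite in_setD1 DF andbT; apply: contraNneq cxD => ->.
Qed.

Lemma saturated_MU F : saturated F -> MU F.
Proof. by case/andP. Qed.

(* For [compl z \in D] this needs only minimal unsatisfiability. *)
Lemma saturated_witness F D z : saturated F -> D \in F -> z.2 \in var F -> z \notin D ->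
  exists2 g, satisfies g (F :\ D) & sat_lit g z.
Proof.
move=> satF DF zF zD; have muF := saturated_MU satF; have [_ unsF _] := MUP muF.
have [czD|czD] := boolP (compl z \in D).
  case/existsP: (MU_satD1 muF DF) => g hg; exists g => //.
  apply: contraNT (unsat_satisfies unsF g) => gz.
  by apply: satisfiesD1 hg _; apply/sat_clauseP; exists (compl z); rewrite ?sat_lit_compl.
have zDv : z.2 \notin varC D by rewrite varC_lit negb_or zD.
case/andP: satF => _ /forall_inP /(_ D DF) /forallP /(_ z).
rewrite zF zDv => /existsP [g /satisfiesP hg].
have gF : satisfies g (F :\ D).
  by apply/satisfiesP => K KF; apply: hg; rewrite inE KF.
exists g => //.
have /sat_clauseP [w] : sat_clause g (D :|: [set z]) by apply: hg; rewrite !inE eqxx orbT.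
rewrite !inE => /orP [wD gw|/eqP -> //].
case/negP: (unsat_satisfies unsF g).
by apply: satisfiesD1 gF _; apply/sat_clauseP; exists w.
Qed.

(* The application [<x -> 1> * F] of the partial assignment making [x] true. *)
Definition assign x F := [set D :\ compl x | D in F & x \notin D].

Lemma assignP x F E :
  reflect (exists2 D, D \in F /\ x \notin D & E = D :\ compl x) (E \in assign x F).
Proof.
apply: (iffP imsetP) => [[D] | [D [DF xD] ->]].
  by rewrite inE => /andP [DF xD] ->; exists D.
by exists D => //; rewrite inE DF.
Qed.

Lemma setD1_notin (A : clause V) w : w \notin A -> A :\ w = A.
Proof. by move=> wA; apply/setDidPl; rewrite disjoint_sym disjoints1. Qed.

Lemma assign_cls_ok x F : cls_ok F -> cls_ok (assign x F).
Proof.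
move=> okF; apply/forall_inP => _ /assignP [E [EF _] ->].
apply/forall_inP => w; rewrite !in_setD1 => /andP [_ wE].
by rewrite negb_and (clause_okP (cls_okP okF EF) wE) orbT.
Qed.

Lemma assign_unsat x F : ~~ sat F -> ~~ sat (assign x F).
Proof.
move=> unsF; apply/existsP => -[g /satisfiesP hg].
case/negP: (unsat_satisfies unsF (setlit g x)); apply/satisfiesP => E EF.
have [xE|xE] := boolP (x \in E); first exact: setlit_hit.
apply: sat_clause_sub (subD1set E (compl x)) _; apply: setlit_keep.
  by rewrite varC_lit !in_setD1 eqxx (negPf xE) andbF.
by apply: hg; apply/assignP; exists E.
Qed.

Lemma card_assign x F C : C \in F -> x \in C -> #|assign x F| < #|F|.
Proof.
move=> CF xC; apply: leq_ltn_trans (leq_imset_card _ _) (proper_card _).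
apply/properP; split; first by apply/subsetP => D; rewrite inE => /andP [].
by exists C => //; rewrite inE xC andbF.
Qed.

Lemma var_assign x F u : u \in var (assign x F) -> u \in var F /\ u != x.2.
Proof.
case/bigcupP => _ /assignP [E [EF xE] ->] /imsetP [w].
rewrite in_setD1 => /andP [wcx wE] ->; split; first exact: mem_var EF wE.
by apply: contraNneq xE => /same_var_lit [<- //|/eqP]; rewrite (negPf wcx).
Qed.

Lemma assign_id x F : x.2 \notin var F -> assign x F = F.
Proof.
move=> xF; have xC C : C \in F -> x.2 \notin varC C.
  by move=> CF; apply: contra xF => ?; apply/bigcupP; exists C.
apply/setP => K; apply/assignP/idP => [[D [DF _] ->]|KF].
  by move: (xC D DF); rewrite varC_lit negb_or => /andP [_ /setD1_notin ->].
move: (xC K KF); rewrite varC_lit negb_or => /andP [xK cxK].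
by exists K; rewrite ?setD1_notin.
Qed.

Lemma ldeg_assign x y F : y.2 != x.2 -> ldeg (assign x F) y <= ldeg F y.
Proof.
move=> yx; apply: leq_trans (leq_imset_card (fun D => D :\ compl x) _).
apply/subset_leq_card/subsetP => _ /setIdP [/assignP [D [DF xD] ->] yD].
by apply/imsetP; exists D => //; rewrite inE DF; move: yD; rewrite in_setD1 => /andP [].
Qed.

Lemma assign_sub x y F : x.2 != y.2 -> assign y (assign x F) \subset assign x (assign y F).
Proof.
move=> xy; apply/subsetP => _ /assignP [_ [/assignP [D [DF xD] ->] yD] ->].
have ycx : y != compl x by apply: contraNneq xy => ->.
have xcy : x != compl y by apply: contraNneq xy => ->.
apply/assignP; exists (D :\ compl y); last by rewrite setDDl setUC -setDDl.
split; last by rewrite in_setD1 xcy.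
by apply/assignP; exists D => //; split=> //; move: yD; rewrite in_setD1 ycx.
Qed.

Lemma assignC x y F : x.2 != y.2 -> assign y (assign x F) = assign x (assign y F).
Proof. by move=> xy; apply/eqP; rewrite eqEsubset !assign_sub // eq_sym. Qed.

Lemma clash_complC C D y :
  (C :&: complC D == [set y]) = (D :&: complC C == [set compl y]).
Proof.
suff imp C' D' y' : C' :&: complC D' == [set y'] -> D' :&: complC C' == [set compl y'].
  by apply/idP/idP => /imp //; rewrite complK.
move=> /eqP /setP h; apply/eqP/setP => w; move: (h (compl w)).
by rewrite !inE !in_complC complK andbC => ->; rewrite -(can_eq complK) complK.
Qed.

Lemma DP_lit x F : DP x.2 F = [set C in F | x.2 \notin varC C] :|:
  [set (C :|: D) :\: [set x; compl x] | C in F, D in F & C :&: complC D == [set x]].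
Proof.
case: x => [[] v] //; rewrite /DP /posl /negl; congr (_ :|: _).
have -> : [set (false, v); compl (false, v)] = [set (true, v); (false, v)] by rewrite setUC.
apply/setP => K; apply/idP/idP => /imset2P [C D CF];
  rewrite inE clash_complC => /andP [DF cl] ->;
  by apply/imset2P; exists D C; rewrite 1?setUC ?inE ?DF ?CF.
Qed.

Section SingularLiteral.
Variables (F : clauseset V) (x : lit V) (C : clause V).
Hypotheses (satF : saturated F) (CF : C \in F) (xC : x \in C)
  (x_only_C : forall D, D \in F -> x \in D -> D = C).

Let muF : MU F := saturated_MU satF.
Let okF : cls_ok F. Proof. by case/MUP: muF. Qed.
Let unsF : ~~ sat F. Proof. by case/MUP: muF. Qed.
Let cxC : compl x \notin C. Proof. exact: clause_okP (cls_okP okF CF) xC. Qed.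

Let notin_compl D w : D \in F -> compl w \in D -> w \notin D.
Proof. by move=> DF /(clause_okP (cls_okP okF DF)); rewrite complK. Qed.

(* If some [z] of [C :\ x] were missing from [D], saturation would give an
   assignment satisfying [F :\ D] and [z]; making [compl x] true then satisfies
   all of [F]. *)
Lemma sing_clauseD1_sub D : D \in F -> compl x \in D -> C :\ x \subset D.
Proof.
move=> DF cxD; apply/subsetP => z; rewrite in_setD1 => /andP [zx zC].
apply: contraT => zD.
have [g gF gz] := saturated_witness satF DF (mem_var CF zC) zD.
case/negP: (unsat_satisfies unsF (setlit g (compl x))); apply/satisfiesP => E EF.
have [cxE|cxE] := boolP (compl x \in E); first exact: setlit_hit.
have [xE|xE] := boolP (x \in E).
  rewrite (x_only_C EF xE); apply/sat_clauseP; exists z => //.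
  rewrite setlit_other //=; apply: contraNneq zx => /same_var_lit [-> //|ez].
  by move: cxC; rewrite -ez zC.
apply: setlit_keep; first by rewrite varC_lit complK negb_or cxE xE.
by apply: (satisfiesP _ _ gF); rewrite in_setD1 EF andbT; apply: contraNneq cxE => ->.
Qed.

Lemma assign_satisfiesD1 E f : E \in F -> x \notin E -> satisfies f (F :\ E) ->
  satisfies f (assign x F :\ (E :\ compl x)).
Proof.
move=> EF xE fF; have fC : sat_clause f C.
  by apply: (satisfiesP _ _ fF); rewrite in_setD1 CF andbT; apply: contraNneq xE => <-.
apply/satisfiesP => K; rewrite in_setD1 => /andP [ne /assignP [E2 [E2F xE2] eqK]].
rewrite {K}eqK in ne *; have /sat_clauseP [w wE2 fw] : sat_clause f E2.
  by apply: (satisfiesP _ _ fF); rewrite in_setD1 E2F andbT; apply: contraNneq ne => ->.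
have [ewx|wcx] := eqVneq w (compl x); last by apply/sat_clauseP; exists w; rewrite // in_setD1 wcx.
subst w; case/sat_clauseP: fC => u uC fu.
have ux : u != x by apply: contraTneq fw => <-; rewrite sat_lit_compl fu.
apply/sat_clauseP; exists u => //.
rewrite in_setD1 (subsetP (sing_clauseD1_sub E2F wE2)) ?in_setD1 ?ux // andbT.
by apply: contraNneq cxC => <-.
Qed.

Lemma assign_MU : MU (assign x F).
Proof.
apply/and3P; split; [exact: assign_cls_ok | exact: assign_unsat |].
apply/forallP => G; apply/implyP => /properP [sGa [_ /assignP [E [EF xE] ->] EG]].
apply: (@sat_sub (assign x F :\ (E :\ compl x))).
  apply/subsetP => K KG; rewrite in_setD1 (subsetP sGa _ KG) andbT.
  by apply: contraNneq EG => <-.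
case/existsP: (MU_satD1 muF EF) => f /(assign_satisfiesD1 EF xE) fa.
by apply/existsP; exists f.
Qed.

Lemma assign_saturated : saturated (assign x F).
Proof.
apply/andP; split; first exact: assign_MU.
apply/forall_inP => _ /assignP [E [EF xE] ->]; apply/forallP => z.
apply/implyP => /andP [zv zE'].
have [zF zx] := var_assign zv.
have zE : z \notin E.
  apply: contra zE' => zE; apply/imsetP; exists z => //; rewrite in_setD1 zE andbT.
  by apply: contraNneq zx => ->.
have [g gF gz] := saturated_witness satF EF zF zE.
apply/existsP; exists g; apply/satisfiesP => K; rewrite in_setU in_set1 => /orP [KE|/eqP ->].
  exact: (satisfiesP _ _ (assign_satisfiesD1 EF xE gF)).
by apply/sat_clauseP; exists z; rewrite // !inE eqxx orbT.
Qed.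

Lemma clash_sing E : E \in F -> compl x \in E -> C :&: complC E = [set x].
Proof.
move=> EF cxE; apply/setP => w; rewrite !inE in_complC.
have [->|wx] := eqVneq w x; first by rewrite xC cxE.
apply/negbTE; rewrite negb_and orbC -implybE; apply/implyP => cwE.
apply: contra (notin_compl EF cwE) => wC.
by apply: (subsetP (sing_clauseD1_sub EF cxE)); rewrite in_setD1 wx.
Qed.

Lemma resolvent_sing E : E \in F -> compl x \in E ->
  (C :|: E) :\: [set x; compl x] = E :\ compl x.
Proof.
move=> EF cxE; have xE := notin_compl EF cxE.
apply/setP => w; rewrite !inE negb_or.
have [->|wx] := eqVneq w x; first by rewrite (negPf xE) /= !andbF.
have [//|_] /= := eqVneq w (compl x).
case wC: (w \in C) => //=.
by rewrite (subsetP (sing_clauseD1_sub EF cxE)) // in_setD1 wx.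
Qed.

Lemma DP_assign : DP x.2 F = assign x F.
Proof.
rewrite DP_lit; apply/setP => K; apply/idP/idP.
- case/setUP => [/setIdP [KF]|/imset2P [C1 D1 C1F]].
    rewrite varC_lit negb_or => /andP [xK cxK].
    by apply/assignP; exists K; rewrite ?setD1_notin.
  rewrite inE => /andP [D1F /eqP cl] ->.
  have /setIP [xC1] : x \in C1 :&: complC D1 by rewrite cl set11.
  rewrite in_complC => cxD1; rewrite (x_only_C C1F xC1) resolvent_sing //.
  by apply/assignP; exists D1; split => //; apply: notin_compl.
- case/assignP => E [EF xE] ->; apply/setUP.
  have [cxE|cxE] := boolP (compl x \in E); last first.
    by left; rewrite setD1_notin // inE EF varC_lit negb_or xE cxE.
  right; apply/imset2P; exists C E; rewrite ?resolvent_sing //.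
  by rewrite inE EF clash_sing // eqxx.
Qed.

End SingularLiteral.

Lemma singular_minn F x : singular F x.2 = (minn (ldeg F x) (ldeg F (compl x)) == 1).
Proof. by case: x => [[] v]; rewrite /singular // minnC. Qed.

Lemma singularP F v : singular F v -> exists x, x.2 = v /\ ldeg F x = 1.
Proof.
rewrite -[v]/((posl v).2) singular_minn => /eqP.
have [le e|lt e] := leqP (ldeg F (posl v)) (ldeg F (compl (posl v))).
  by exists (posl v); split => //; lia.
by exists (compl (posl v)); split => //; lia.
Qed.

Lemma singular_ldeg1 F x : MU F -> ldeg F x = 1 -> singular F x.2.
Proof.
move=> muF x1; have [C [CF xC _]] := ldeg1P x1.
have := MU_ldeg_gt0 (x := compl x) muF (mem_var CF xC).
by rewrite singular_minn x1 => ?; apply/eqP; lia.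
Qed.

Lemma sDP_stepP F G : saturated F ->
  reflect (exists2 x, ldeg F x = 1 & G = assign x F) (sDP_step F G).
Proof.
move=> satF; apply: (iffP andP) => [[_ /existsP [v /andP [sv /eqP ->]]]|[x x1 ->]].
  have [x [<- x1]] := singularP sv; have [C [CF xC xo]] := ldeg1P x1.
  by exists x => //; apply: DP_assign satF CF xC xo.
have [C [CF xC xo]] := ldeg1P x1; have muF := saturated_MU satF.
split => //; apply/existsP; exists x.2.
by rewrite singular_ldeg1 //= (DP_assign satF CF xC xo) eqxx.
Qed.

Lemma sDP_step_decr F G : saturated F -> sDP_step F G -> saturated G /\ #|G| < #|F|.
Proof.
move=> satF /(sDP_stepP _ satF) [x x1 ->]; have [C [CF xC xo]] := ldeg1P x1.
by split; [apply: assign_saturated CF xC xo | apply: card_assign CF xC].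
Qed.

Lemma connect_assign F x : saturated F -> ldeg F x <= 1 ->
  connect (@sDP_step V) F (assign x F).
Proof.
move=> satF x1; have [xF|xF] := boolP (x.2 \in var F); last by rewrite assign_id.
apply/connect1/(sDP_stepP _ satF); exists x => //.
by apply/eqP; rewrite eqn_leq x1 MU_ldeg_gt0 // saturated_MU.
Qed.

(* Two singular steps on different variables commute, and each one leaves the
   other literal with degree at most one. *)
Lemma sDP_local_confluence F G1 G2 : saturated F -> sDP_step F G1 -> sDP_step F G2 ->
  exists2 H, connect (@sDP_step V) G1 H & connect (@sDP_step V) G2 H.
Proof.
move=> satF /(sDP_stepP _ satF) [x x1 ->] /(sDP_stepP _ satF) [y y1 ->].
have [C [CF xC xo]] := ldeg1P x1; have [D [DF yD yo]] := ldeg1P y1.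
have [xy|xy] := eqVneq x.2 y.2.
  exists (assign x F); first exact: connect0.
  by rewrite -(DP_assign satF DF yD yo) -xy (DP_assign satF CF xC xo) connect0.
exists (assign y (assign x F)).
  apply: connect_assign; first exact: assign_saturated CF xC xo.
  by rewrite -y1 ldeg_assign // eq_sym.
rewrite assignC //; apply: connect_assign; first exact: assign_saturated DF yD yo.
by rewrite -x1 ldeg_assign.
Qed.

Lemma normal_sDP_step F : MU F -> normal (@sDP_step V) F = nonsingular F.
Proof.
move=> muF; apply/forallP/forallP => [ns v|ns G].
  apply: contraNN (ns (DP v F)) => sv; rewrite /sDP_step muF.
  by apply/existsP; exists v; rewrite sv eqxx.
by apply/negP => /andP [_ /existsP [v /andP [sv _]]]; move: (ns v); rewrite sv.
Qed.

End Clauses.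

Theorem theorem23 (V : finType) (F : clauseset V) :
  saturated F -> #|sDP F| = 1.
Proof.
move=> satF.
have -> : sDP F = [set G | connect (@sDP_step V) F G && normal (@sDP_step V) G].
  apply/setP => G; rewrite !inE; have [FG|//] := boolP (connect _ F G).
  have muG := saturated_MU (connect_inv (@sDP_step_decr V) satF FG).
  by rewrite normal_sDP_step // muG andbT.
exact: (card_normal_forms (m := fun G : clauseset V => #|G|)
  (@sDP_step_decr V) (@sDP_local_confluence V) satF).
Qed.
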